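(* Let $G=(V,E)$ be an atomic bispanning graph, $v\in V$ a vertex of degree $3$ with adjacent vertices $x,y,z$ joined to $v$ by edges $e_x,e_y,e_z$, and let $G_{x,y},G_{x,z},G_{y,z}$ be the reduction graphs. Then $$V_{\tau(G)}=\rho_{e_{x,y},z}(V_{\tau(G_{x,y})})\,\dot\cup\,\rho_{e_{x,z},y}(V_{\tau(G_{x,z})})\,\dot\cup\,\rho_{e_{y,z},x}(V_{\tau(G_{y,z})}),$$ where for $(a,b)\in\{(x,y),(x,z),(y,z)\}$ and $c$ the remaining neighbour, $\rho_{e_{a,b},c}:V_{\tau(G_{a,b})}\to V_{\tau(G)}$ maps $(S,T)$ to $(S-e_{a,b}+e_a+e_b,\;T+e_c)$ if $e_{a,b}\in S$ and to $(S+e_c,\;T-e_{a,b}+e_a+e_b)$ if $e_{a,b}\in T$.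
   Context: Graphs are finite, undirected, may have parallel edges, no loops; $X+a=X\cup\{a\}$, $X-a=X\setminus\{a\}$. A spanning tree is $T\subseteq E$ with $(V,T)$ connected and acyclic; $G$ is bispanning if $E$ is the union of two disjoint spanning trees; atomic if its only bispanning subgraphs are itself and single vertices. For a bispanning graph $H$ with edge set $F$, $V_{\tau(H)}$ is the set of ordered pairs $(S,T)$ of disjoint spanning trees of $H$ with $S\cup T=F$. The reduction graph $G_{a,b}$ has vertex set $V-v$ and edge set $E-e_x-e_y-e_z+e_{a,b}$, where $e_{a,b}$ is a new edge with ends $a,b$ (it is bispanning). *)

(* Multigraphs: vertex type V, edge type E (finTypes),
   each edge e has endpoints src e, dst e (orientation irrelevant).
   A (sub)graph is given by a vertex set VS and an edge set ES. *)
From mathcomp Require Import all_boot.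
Set Implicit Arguments. Unset Strict Implicit. Unset Printing Implicit Defensive.

Section Graphs.
Variables (V E : finType) (src dst : E -> V).

Definition joins (e : E) (u w : V) : bool :=
  ((src e == u) && (dst e == w)) || ((src e == w) && (dst e == u)).

Definition adj (T : {set E}) : rel V := fun u w => [exists e in T, joins e u w].

Definition connectedb (VS : {set V}) (T : {set E}) : bool :=
  [forall u in VS, forall w in VS, connect (adj T) u w].

(* (.,T) is acyclic: no edge e of T lies on a cycle, i.e. the ends of e
   are not joined by a path in T - e (a loop is itself a cycle). *)
Definition acyclicb (T : {set E}) : bool :=
  [forall e in T, ~~ connect (adj (T :\ e)) (src e) (dst e)].

Definition spanning_tree (VS : {set V}) (ES T : {set E}) : bool :=
  [&& T \subset ES, connectedb VS T & acyclicb T].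

Definition Vtau (VS : {set V}) (ES : {set E}) : {set {set E} * {set E}} :=
  [set p : {set E} * {set E} |
     [&& spanning_tree VS ES p.1, spanning_tree VS ES p.2,
         [disjoint p.1 & p.2] & p.1 :|: p.2 == ES]].

Definition bispanning (VS : {set V}) (ES : {set E}) : Prop :=
  exists S T : {set E},
    [/\ spanning_tree VS ES S, spanning_tree VS ES T,
        [disjoint S & T] & S :|: T = ES].

Definition subgraph (VS : {set V}) (ES : {set E}) (VS' : {set V}) (ES' : {set E}) : Prop :=
  [/\ VS' \subset VS, ES' \subset ES, VS' != set0 &
      forall e, e \in ES' -> (src e \in VS') && (dst e \in VS')].

Definition atomic (VS : {set V}) (ES : {set E}) : Prop :=
  forall VS' ES', subgraph VS ES VS' ES' -> bispanning VS' ES' ->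
    (VS' = VS /\ ES' = ES) \/ #|VS'| = 1.

End Graphs.

(* Reduction graph G_{a,b}: vertex set V - v, edge type option E where
   None is the new edge e_{a,b} with ends a, b; edges Some e for e not in
   {e_x,e_y,e_z}. *)
Section Reduction.
Variables (V E : finType) (src dst : E -> V).

Definition red_src (a : V) (o : option E) : V :=
  if o is Some e then src e else a.
Definition red_dst (b : V) (o : option E) : V :=
  if o is Some e then dst e else b.
Definition red_vertices (v : V) : {set V} := [set: V] :\ v.
Definition red_edges (ex ey ez : E) : {set option E} :=
  [set o : option E | if o is Some e then e \notin [set ex; ey; ez] else true].

Definition Vtau_red (v a b : V) (ex ey ez : E) :=
  Vtau (red_src a) (red_dst b) (red_vertices v) (red_edges ex ey ez).

Definition rho (ea eb ec : E) (p : {set option E} * {set option E}) :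
    {set E} * {set E} :=
  let S := [set e | Some e \in p.1] in
  let T := [set e | Some e \in p.2] in
  if None \in p.1 then (S :|: [set ea; eb], ec |: T)
  else (ec |: S, T :|: [set ea; eb]).

Definition rho_image (v a b : V) (ex ey ez ea eb ec : E) : {set {set E} * {set E}} :=
  [set rho ea eb ec p | p in Vtau_red v a b ex ey ez].

End Reduction.

From Pilot Require Import Defs.
From mathcomp Require Import all_boot.
Set Implicit Arguments. Unset Strict Implicit. Unset Printing Implicit Defensive.

(* Every spanning tree reaches v, hence contains one of e_x, e_y, e_z; so in a
   pair (S, T) of complementary spanning trees one tree contains exactly two of
   them, say e_a and e_b, and the other contains e_c.  Deleting v and replacing
   the path a - v - b by the new edge e_{a,b} turns the pair into complementary
   spanning trees of G_{a,b}, which rho_{e_{a,b},c} maps back.  Connectivity is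
   transported from G to G_{a,b} along the vertex map collapsing v onto one of
   its neighbours, and back by expanding e_{a,b} into a - v - b.  Hence the image
   of rho_{e_{a,b},c} consists exactly of the pairs whose first tree separates
   e_c from e_a and e_b, and the three choices of c partition V_tau(G). *)

Lemma disjointP (T : finType) (A B : {pred T}) :
  reflect (forall x, x \in A -> x \in B -> False) [disjoint A & B].
Proof.
rewrite disjoint_subset; apply: (iffP subsetP) => [AB x /AB | AB x /AB nB].
  by rewrite inE => /negP.
by rewrite inE; apply/negP.
Qed.

Section Connectivity.
Variables (V E : finType) (src dst : E -> V).
Local Notation joins := (joins src dst).
Local Notation adj := (adj src dst).

Lemma joinsC e u w : joins e u w = joins e w u.
Proof. by rewrite /Defs.joins orbC. Qed.

Lemma joins_ends e : joins e (src e) (dst e).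
Proof. by rewrite /Defs.joins !eqxx. Qed.

Lemma adj_sym (T : {set E}) : symmetric (adj T).
Proof.
move=> u w; apply/existsP/existsP => -[e /andP[eT j]];
  by exists e; rewrite eT /= joinsC.
Qed.

Lemma connect_adjC (T : {set E}) u w :
  connect (adj T) u w = connect (adj T) w u.
Proof. exact: (sym_connect_sym (adj_sym T)). Qed.

Lemma connect_edge (T : {set E}) e u w :
  e \in T -> joins e u w -> connect (adj T) u w.
Proof. by move=> eT j; apply: connect1; apply/existsP; exists e; rewrite eT. Qed.

Lemma connect_ends (T : {set E}) e u w : joins e u w ->
  connect (adj T) (src e) (dst e) = connect (adj T) u w.
Proof. by case/orP=> /andP[/eqP-> /eqP->] //; rewrite connect_adjC. Qed.

Lemma connect_ends_map (r : rel V) (f : V -> V) e u w : symmetric r ->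
  joins e u w -> connect r (f u) (f w) -> connect r (f (src e)) (f (dst e)).
Proof.
by move=> sr; case/orP=> /andP[/eqP-> /eqP->] //; rewrite (sym_connect_sym sr).
Qed.

Lemma connect_adj_map (r : rel V) (f : V -> V) (T : {set E}) : symmetric r ->
  (forall e, e \in T -> connect r (f (src e)) (f (dst e))) ->
  forall u w, connect (adj T) u w -> connect r (f u) (f w).
Proof.
move=> sr fT u w /connectP[p + ->]; elim: p u => [|x p IHp] u /=.
  by rewrite connect0.
case/andP=> /existsP[e /andP[eT j]] /IHp; apply: connect_trans.
case/orP: j => /andP[/eqP <- /eqP <-]; first exact: fT.
by rewrite (sym_connect_sym sr); apply: fT.
Qed.

Lemma connect_isolated (r : rel V) u w :
  (forall w', ~~ r u w') -> connect r u w -> w = u.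
Proof.
move=> ru /connectP[[|y p] /= pth ->] //.
by case/andP: pth; rewrite (negbTE (ru y)).
Qed.

Lemma connectedbP (VS : {set V}) (T : {set E}) :
  reflect (forall u w, u \in VS -> w \in VS -> connect (adj T) u w)
          (connectedb src dst VS T).
Proof.
apply: (iffP forall_inP) => [con u w uV wV | con u uV].
  by move/forall_inP: (con u uV); apply.
by apply/forall_inP => w; apply: con.
Qed.

Lemma acyclicbP (T : {set E}) :
  reflect (forall e, e \in T -> ~~ connect (adj (T :\ e)) (src e) (dst e))
          (acyclicb src dst T).
Proof. exact: forall_inP. Qed.

Lemma mem_Vtau (VS : {set V}) (ES S T : {set E}) :
  ((S, T) \in Vtau src dst VS ES) =
  [&& spanning_tree src dst VS ES S, spanning_tree src dst VS ES T,
      [disjoint S & T] & S :|: T == ES].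
Proof. by rewrite inE. Qed.

Lemma Vtau_swap (VS : {set V}) (ES S T : {set E}) :
  ((S, T) \in Vtau src dst VS ES) = ((T, S) \in Vtau src dst VS ES).
Proof. by rewrite !mem_Vtau disjoint_sym setUC andbCA. Qed.

Lemma Vtau_compl (VS : {set V}) (ES S T : {set E}) e :
  (S, T) \in Vtau src dst VS ES -> e \in ES -> (e \in T) = (e \notin S).
Proof.
rewrite mem_Vtau => /and4P[_ _ dST /eqP defES].
rewrite -defES in_setU; case eS: (e \in S) => //=.
by rewrite (disjointFr dST eS).
Qed.

End Connectivity.

Lemma red_edges_perm (E : finType) (e1 e2 e3 f1 f2 f3 : E) :
  (forall e, (e \in [set e1; e2; e3]) = (e \in [set f1; f2; f3])) ->
  red_edges e1 e2 e3 = red_edges f1 f2 f3.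
Proof.
move=> same; apply/setP => -[e|]; rewrite !inE //.
by have := same e; rewrite !inE => ->.
Qed.

Lemma rho_image_perm (V E : finType) (src dst : E -> V) (v a b : V)
    (e1 e2 e3 f1 f2 f3 ea eb ec : E) :
  (forall e, (e \in [set e1; e2; e3]) = (e \in [set f1; f2; f3])) ->
  rho_image src dst v a b e1 e2 e3 ea eb ec =
  rho_image src dst v a b f1 f2 f3 ea eb ec.
Proof. by move=> same; rewrite /rho_image /Vtau_red (red_edges_perm same). Qed.

Section Reduction.
Variables (V E : finType) (src dst : E -> V) (v a b c : V) (ea eb ec : E).
Hypotheses (no_loops : forall e, src e != dst e)
  (Ha : joins src dst ea v a) (Hb : joins src dst eb v b)
  (Hc : joins src dst ec v c)
  (ea_eb : ea != eb) (ea_ec : ea != ec) (eb_ec : eb != ec)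
  (star : forall e, ((src e == v) || (dst e == v)) = (e \in [set ea; eb; ec])).

Local Notation Ev := [set ea; eb; ec].
Local Notation adjG := (adj src dst).
Local Notation adjR := (adj (red_src src a) (red_dst dst b)).
Local Notation RE := (red_edges ea eb ec).
Local Notation stG := (spanning_tree src dst [set: V] [set: E]).
Local Notation stR :=
  (spanning_tree (red_src src a) (red_dst dst b) (red_vertices v) RE).
Local Notation VG := (Vtau src dst [set: V] [set: E]).
Local Notation VR := (Vtau (red_src src a) (red_dst dst b) (red_vertices v) RE).
Local Notation old X := [set e | Some e \in X].

Lemma neighbour_neq_v e w : joins src dst e v w -> w != v.
Proof.
apply: contraTneq => ->; rewrite /joins orbb; apply/negP => /andP[/eqP s /eqP d].
by move: (no_loops e); rewrite s d eqxx.
Qed.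

Lemma joins_v_star e w : joins src dst e v w -> e \in Ev.
Proof. by rewrite -star; case/orP=> /andP[/eqP-> /eqP->]; rewrite eqxx ?orbT. Qed.

Lemma mem_red_vertices u : (u \in red_vertices v) = (u != v).
Proof. by rewrite !inE andbT. Qed.

Lemma mem_red_edges e : (Some e \in RE) = (e \notin Ev).
Proof. by rewrite inE. Qed.

Lemma joins_new_edge : joins (red_src src a) (red_dst dst b) None a b.
Proof. by rewrite /joins /= !eqxx. Qed.

Definition contract (x u : V) : V := if u == v then x else u.

Lemma contract_v x : contract x v = x.
Proof. by rewrite /contract eqxx. Qed.

Lemma contract_id x u : u != v -> contract x u = u.
Proof. by rewrite /contract => /negbTE->. Qed.

Lemma contract_old x (Z : {set option E}) e : Some e \in Z -> e \notin Ev ->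
  connect (adjR Z) (contract x (src e)) (contract x (dst e)).
Proof.
move=> eZ; rewrite -star => /norP[sv dv]; rewrite !contract_id //.
exact: connect_edge eZ (joins_ends _ _ _).
Qed.

Lemma contract_star x (r : rel V) e w : symmetric r -> joins src dst e v w ->
  connect r x w -> connect r (contract x (src e)) (contract x (dst e)).
Proof.
move=> sr j xw; have wv := neighbour_neq_v j.
by apply: connect_ends_map sr j _; rewrite contract_v contract_id.
Qed.

Lemma contract_connect x (Y : {set E}) (Z : {set option E}) u w :
  connect (adjG Y) u w ->
  (forall e, e \in Y -> connect (adjR Z) (contract x (src e)) (contract x (dst e))) ->
  connect (adjR Z) (contract x u) (contract x w).
Proof. by move=> uw YZ; apply: connect_adj_map (adj_sym _ _ _) YZ u w uw. Qed.

Lemma old_not_star (X : {set option E}) e :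
  X \subset RE -> Some e \in X -> e \notin Ev.
Proof. by move=> XRE /(subsetP XRE); rewrite mem_red_edges. Qed.

Lemma old_ends_neq_v (X : {set option E}) e :
  X \subset RE -> Some e \in X -> src e != v /\ dst e != v.
Proof. by move=> XRE /(old_not_star XRE); rewrite -star => /norP. Qed.

Lemma connect_via_v (Y : {set E}) : ea \in Y -> eb \in Y -> connect (adjG Y) a b.
Proof.
move=> eaY ebY; apply: (connect_trans (y := v)); last exact: connect_edge ebY Hb.
by apply: connect_edge eaY _; rewrite joinsC.
Qed.

Lemma expand_red (X : {set option E}) (Y : {set E}) :
  (forall e, Some e \in X -> e \in Y) -> (None \in X -> (ea \in Y) && (eb \in Y)) ->
  forall o, o \in X -> connect (adjG Y) (red_src src a o) (red_dst dst b o).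
Proof.
move=> XY NY [e|] oX /=; first exact: connect_edge (XY e oX) (joins_ends _ _ _).
by case/andP: (NY oX); apply: connect_via_v.
Qed.

Lemma connected_expand (X : {set option E}) (Y : {set E}) w0 :
  connectedb (red_src src a) (red_dst dst b) (red_vertices v) X ->
  (forall o, o \in X -> connect (adjG Y) (red_src src a o) (red_dst dst b o)) ->
  w0 != v -> connect (adjG Y) v w0 -> connectedb src dst [set: V] Y.
Proof.
move=> /connectedbP conX XY w0v vw0.
have off_v u w : u != v -> w != v -> connect (adjG Y) u w.
  move=> uv wv; have := conX u w; rewrite !mem_red_vertices => /(_ uv wv).
  exact: (connect_adj_map (f := id) (adj_sym _ _ Y)).
have from_v u : connect (adjG Y) v u.
  have [->|uv] := eqVneq u v; first exact: connect0.
  exact: connect_trans vw0 (off_v _ _ w0v uv).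
apply/connectedbP => u w _ _.
have [->|uv] := eqVneq u v; first exact: from_v.
have [->|wv] := eqVneq w v; first by rewrite connect_adjC.
exact: off_v.
Qed.

Lemma acyclic_add_pair (X : {set option E}) :
  X \subset RE -> acyclicb (red_src src a) (red_dst dst b) X -> None \in X ->
  acyclicb src dst (old X :|: [set ea; eb]).
Proof.
move=> XRE /acyclicbP acX NX; set Y := _ :|: _.
have inY e : (e \in Y) = [|| Some e \in X, e == ea | e == eb] by rewrite !inE orbA.
have old_edge x o e : o != Some e -> Some e \in X ->
    connect (adjR (X :\ o)) (contract x (src e)) (contract x (dst e)).
  move=> oe eX; apply: contract_old (old_not_star XRE eX).
  by rewrite !inE eq_sym oe.
have new_edge o : o != None -> connect (adjR (X :\ o)) a b.
  by move=> oN; apply: connect_edge joins_new_edge; rewrite !inE eq_sym oN.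
apply/acyclicbP => e; rewrite inY => /or3P[eX | /eqP-> | /eqP->].
- have [sv dv] := old_ends_neq_v XRE eX.
  apply: contra (acX _ eX) => /= /(contract_connect (x := a) (Z := X :\ Some e)).
  rewrite !contract_id //; apply=> e' /setD1P[e'e]; rewrite inY.
  case/or3P=> [e'X | /eqP-> | /eqP->].
  + by apply: old_edge e'X; apply: contra_neq e'e => -[].
  + exact: contract_star (adj_sym _ _ _) Ha (connect0 _ _).
  + exact: contract_star (adj_sym _ _ _) Hb (new_edge _ _).
- (* Collapsing v onto b turns a cycle through e_a into one through e_{a,b}. *)
  rewrite (connect_ends _ Ha); apply: contra (acX _ NX) => /= .
  move/(contract_connect (x := b) (Z := X :\ None)).
  rewrite contract_v contract_id ?(neighbour_neq_v Ha) // connect_adjC; apply.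
  move=> e' /setD1P[e'a]; rewrite inY => /or3P[e'X | /eqP e'a' | /eqP->].
  + exact: old_edge e'X.
  + by rewrite e'a' eqxx in e'a.
  + exact: contract_star (adj_sym _ _ _) Hb (connect0 _ _).
- rewrite (connect_ends _ Hb); apply: contra (acX _ NX) => /= .
  move/(contract_connect (x := a) (Z := X :\ None)).
  rewrite contract_v contract_id ?(neighbour_neq_v Hb) //; apply.
  move=> e' /setD1P[e'b]; rewrite inY => /or3P[e'X | /eqP-> | /eqP e'b'].
  + exact: old_edge e'X.
  + exact: contract_star (adj_sym _ _ _) Ha (connect0 _ _).
  + by rewrite e'b' eqxx in e'b.
Qed.

Lemma acyclic_add_ec (X : {set option E}) :
  X \subset RE -> acyclicb (red_src src a) (red_dst dst b) X -> None \notin X ->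
  acyclicb src dst (ec |: old X).
Proof.
move=> XRE /acyclicbP acX NX; set Y := _ |: _.
have inY e : (e \in Y) = (e == ec) || (Some e \in X) by rewrite !inE.
apply/acyclicbP => e; rewrite inY => /orP[/eqP-> | eX].
  (* Without e_c the vertex v is isolated. *)
  rewrite (connect_ends _ Hc); apply/negP => /connect_isolated vc.
  suff /eqP : c = v by rewrite (negbTE (neighbour_neq_v Hc)).
  apply: vc => w; apply/existsP => -[e' /andP[/setD1P[e'c]]]; rewrite inY (negbTE e'c).
  by move=> /= e'X /joins_v_star; apply/negP/(old_not_star XRE).
have [sv dv] := old_ends_neq_v XRE eX.
apply: contra (acX _ eX) => /= /(contract_connect (x := c) (Z := X :\ Some e)).
rewrite !contract_id //; apply=> e' /setD1P[e'e]; rewrite inY.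
case/orP=> [/eqP-> | e'X].
  exact: contract_star (adj_sym _ _ _) Hc (connect0 _ _).
apply: contract_old (old_not_star XRE e'X).
by rewrite !inE e'X andbT; apply: contra_neq e'e => -[].
Qed.

Lemma spanning_tree_add_pair (X : {set option E}) :
  stR X -> None \in X -> stG (old X :|: [set ea; eb]).
Proof.
case/and3P=> XRE conX acX NX; rewrite /spanning_tree subsetT acyclic_add_pair // andbT.
have eaY : ea \in old X :|: [set ea; eb] by rewrite !inE eqxx orbT.
have ebY : eb \in old X :|: [set ea; eb] by rewrite !inE eqxx !orbT.
apply: connected_expand conX _ (neighbour_neq_v Ha) (connect_edge eaY Ha).
by apply: expand_red => [e eX|_]; rewrite ?eaY ?ebY // !inE eX.
Qed.

Lemma spanning_tree_add_ec (X : {set option E}) :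
  stR X -> None \notin X -> stG (ec |: old X).
Proof.
case/and3P=> XRE conX acX NX; rewrite /spanning_tree subsetT acyclic_add_ec // andbT.
have ecY : ec \in ec |: old X by rewrite !inE eqxx.
apply: connected_expand conX _ (neighbour_neq_v Hc) (connect_edge ecY Hc).
apply: expand_red => [e eX | NX']; first by rewrite !inE eX orbT.
by rewrite NX' in NX.
Qed.

Definition red_set (S : {set E}) (n : bool) : {set option E} :=
  [set o | if o is Some e then (e \in S) && (e \notin Ev) else n].

Lemma red_set_sub S n : red_set S n \subset RE.
Proof. by apply/subsetP => -[e|]; rewrite !inE // => /andP[]. Qed.

Lemma connected_red_pair S :
  connectedb src dst [set: V] S -> ea \in S -> eb \in S -> ec \notin S ->
  connectedb (red_src src a) (red_dst dst b) (red_vertices v) (red_set S true).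
Proof.
move=> /connectedbP conS eaS ebS ecS; apply/connectedbP => u w.
rewrite !mem_red_vertices => uv wv; rewrite -(contract_id a uv) -(contract_id a wv).
apply: (contract_connect (conS u w (in_setT u) (in_setT w))) => e eS.
have [->|nea] := eqVneq e ea.
  exact: contract_star (adj_sym _ _ _) Ha (connect0 _ _).
have [->|neb] := eqVneq e eb.
  by apply: contract_star (adj_sym _ _ _) Hb (connect_edge _ joins_new_edge); rewrite inE.
have eEv : e \notin Ev.
  by rewrite !inE (negbTE nea) (negbTE neb) /=; apply: contraNneq ecS => <-.
by apply: contract_old => //; rewrite in_set /= eS eEv.
Qed.

Lemma connected_red_ec T :
  connectedb src dst [set: V] T -> ec \in T -> ea \notin T -> eb \notin T ->
  connectedb (red_src src a) (red_dst dst b) (red_vertices v) (red_set T false).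
Proof.
move=> /connectedbP conT ecT eaT ebT; apply/connectedbP => u w.
rewrite !mem_red_vertices => uv wv; rewrite -(contract_id c uv) -(contract_id c wv).
apply: (contract_connect (conT u w (in_setT u) (in_setT w))) => e eT.
have [->|nec] := eqVneq e ec.
  exact: contract_star (adj_sym _ _ _) Hc (connect0 _ _).
have eEv : e \notin Ev.
  rewrite !inE (negbTE nec) orbF; apply/norP; split.
    by apply: contraNneq eaT => <-.
  by apply: contraNneq ebT => <-.
by apply: contract_old => //; rewrite in_set /= eT eEv.
Qed.

Lemma acyclic_red_set S (n : bool) :
  acyclicb src dst S -> (n -> (ea \in S) && (eb \in S)) ->
  acyclicb (red_src src a) (red_dst dst b) (red_set S n).
Proof.
move=> /acyclicbP acS nS; apply/acyclicbP => -[e|] oX /=.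
  have /andP[eS eEv] : (e \in S) && (e \notin Ev) by rewrite inE in oX.
  apply: contra (acS _ eS); apply: (connect_adj_map (f := id) (adj_sym _ _ _)).
  apply: expand_red => [e' | N].
    by rewrite !inE /= => /andP[e'e /andP[e'S _]]; rewrite e'S e'e.
  have /andP[eaS ebS] : (ea \in S) && (eb \in S) by apply: nS; rewrite !inE in N.
  rewrite !inE eaS ebS !andbT.
  by apply/andP; split; apply: contraNneq eEv => <-; rewrite !inE eqxx ?orbT.
have /andP[eaS ebS] : (ea \in S) && (eb \in S) by apply: nS; rewrite inE in oX.
apply: contra (acS _ eaS); rewrite (connect_ends _ Ha) => ab.
apply: (connect_trans (y := b)).
  by apply: connect_edge Hb; rewrite !inE ebS andbT eq_sym.
rewrite connect_adjC; move: ab; apply: (connect_adj_map (f := id) (adj_sym _ _ _)).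
apply: expand_red => [e' | ]; last by rewrite !inE eqxx.
rewrite !inE /= => /andP[e'S e'Ev]; rewrite e'S andbT.
by apply: contraNneq e'Ev => ->; rewrite eqxx.
Qed.

Lemma red_set_Vtau (S T : {set E}) : (S, T) \in VG -> ea \in S -> eb \in S -> ec \in T ->
  (red_set S true, red_set T false) \in VR.
Proof.
move=> m eaS ebS ecT; move: (m); rewrite mem_Vtau => /and4P[stS stT _ _].
have compl e : (e \in T) = (e \notin S) := Vtau_compl m (in_setT e).
have ecS : ec \notin S by rewrite -compl.
case/and3P: stS => _ conS acS; case/and3P: stT => _ conT acT.
rewrite mem_Vtau /spanning_tree !red_set_sub connected_red_pair //.
rewrite connected_red_ec ?compl ?eaS ?ebS ?acyclic_red_set ?eaS ?ebS //=.
apply/andP; split.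
  by apply/disjointP => -[e|]; rewrite !inE // compl => /andP[-> _].
by apply/eqP/setP => -[e|]; rewrite !inE // compl; case: (e \in S); rewrite ?orbF.
Qed.

Lemma rho_red_set (S T : {set E}) :
  ea \in S -> eb \in S -> ec \notin S -> ec \in T -> ea \notin T -> eb \notin T ->
  rho ea eb ec (red_set S true, red_set T false) = (S, T) /\
  rho ea eb ec (red_set T false, red_set S true) = (T, S).
Proof.
move=> eaS ebS ecS ecT eaT ebT.
have defS : old (red_set S true) :|: [set ea; eb] = S.
  apply/setP => e; rewrite !inE.
  have [->|nea] := eqVneq e ea; first by rewrite eaS orbT.
  have [->|neb] := eqVneq e eb; first by rewrite ebS !orbT.
  have [->|nec] := eqVneq e ec; first by rewrite (negbTE ecS).
  by rewrite /= andbT !orbF.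
have defT : ec |: old (red_set T false) = T.
  apply/setP => e; rewrite !inE.
  have [->|nec] := eqVneq e ec; first by rewrite ecT.
  have [->|nea] := eqVneq e ea; first by rewrite (negbTE eaT).
  have [->|neb] := eqVneq e eb; first by rewrite (negbTE ebT).
  by rewrite /= andbT.
by rewrite /rho /= !inE /= defS defT.
Qed.

Lemma rho_pair_Vtau (X Y : {set option E}) : (X, Y) \in VR -> None \in X ->
  (old X :|: [set ea; eb], ec |: old Y) \in VG.
Proof.
move=> m NX; move: (m); rewrite [(X, Y) \in _]mem_Vtau => /and4P[stX stY dXY /eqP defRE].
have NY : None \notin Y by rewrite (disjointFr dXY NX).
have XEv : forall e, Some e \in X -> e \notin Ev.
  by move=> e; apply: old_not_star; case/and3P: stX.
have YEv : forall e, Some e \in Y -> e \notin Ev.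
  by move=> e; apply: old_not_star; case/and3P: stY.
rewrite mem_Vtau spanning_tree_add_pair ?spanning_tree_add_ec //=.
apply/andP; split.
  apply/disjointP => e; rewrite !inE => /orP[eX | eab] /orP[/eqP ec' | eY].
  - by move: (XEv _ eX); rewrite ec' !inE eqxx orbT.
  - by rewrite (disjointFr dXY eX) in eY.
  - by move: eab; rewrite ec' ![ec == _]eq_sym (negbTE ea_ec) (negbTE eb_ec).
  - by move: (YEv _ eY); rewrite !inE; case/orP: eab => ->; rewrite ?orbT.
apply/eqP/setP => e; have [eEv | eEv] := boolP (e \in Ev).
  by move: eEv; rewrite !inE -orbA => /or3P[] ->; rewrite ?orbT.
have : Some e \in RE by rewrite mem_red_edges.
by rewrite -defRE !inE => /orP[] ->; rewrite ?orbT.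
Qed.

Lemma rho_Vtau p : p \in VR -> rho ea eb ec p \in VG.
Proof.
case: p => X Y m; rewrite /rho /=; case: ifP => NX; first exact: rho_pair_Vtau.
have NY : None \in Y by rewrite (Vtau_compl m) ?NX // inE.
by rewrite Vtau_swap; apply: rho_pair_Vtau NY; rewrite -Vtau_swap.
Qed.

Definition separates_ec (S : {set E}) : bool :=
  ((ea \in S) == (eb \in S)) && ((ec \in S) != (ea \in S)).

Lemma rho_separates_ec p : p \in VR -> separates_ec (rho ea eb ec p).1.
Proof.
case: p => X Y; rewrite mem_Vtau => /and4P[/and3P[XRE _ _] _ _ _].
have notX e : e \in Ev -> (Some e \in X) = false.
  by move=> eEv; apply: contraTF eEv => /(old_not_star XRE).
have [nXa nXb nXc] : [/\ Some ea \in X = false, Some eb \in X = false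
                      & Some ec \in X = false].
  by split; apply: notX; rewrite !inE eqxx ?orbT.
rewrite /rho /separates_ec; case: ifP => _ /=; rewrite !inE !eqxx ?orbT /=.
  by rewrite nXc ![ec == _]eq_sym (negbTE ea_ec) (negbTE eb_ec).
by rewrite nXa nXb (negbTE ea_ec) (negbTE eb_ec).
Qed.

Lemma mem_rho_image p :
  (p \in rho_image src dst v a b ea eb ec ea eb ec) = (p \in VG) && separates_ec p.1.
Proof.
apply/imsetP/andP => [[q qR ->] | [m]].
  by split; [apply: rho_Vtau | apply: rho_separates_ec].
case: p m => S T m /andP[/eqP eab ecS].
have compl e : (e \in T) = (e \notin S) := Vtau_compl m (in_setT e).
have [eaS | eaS] := boolP (ea \in S).
  have ebS : eb \in S by rewrite -eab.
  have ecS' : ec \notin S by apply: contraNN ecS => ->; rewrite eaS.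
  exists (red_set S true, red_set T false); first by apply: red_set_Vtau; rewrite ?compl.
  have [ecT eaT ebT] : [/\ ec \in T, ea \notin T & eb \notin T].
    by rewrite !compl ecS' eaS ebS.
  by case: (rho_red_set eaS ebS ecS' ecT eaT ebT) => ->.
have ebS : eb \notin S by rewrite -eab.
have ecS' : ec \in S by move: ecS; rewrite (negbTE eaS); case: (ec \in S).
have [eaT ebT ecT] : [/\ ea \in T, eb \in T & ec \notin T].
  by rewrite !compl ecS' eaS ebS.
exists (red_set S false, red_set T true).
  by rewrite Vtau_swap; apply: red_set_Vtau => //; rewrite Vtau_swap.
by case: (rho_red_set eaT ebT ecT ecS' eaS ebS) => _ ->.
Qed.

Lemma spanning_tree_meets_star S : stG S -> [|| ea \in S, eb \in S | ec \in S].
Proof.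
case/and3P=> _ /connectedbP conS _; apply/negPn/negP => noStar.
have /connect_isolated va := conS v a (in_setT v) (in_setT a).
suff /eqP : a = v by rewrite (negbTE (neighbour_neq_v Ha)).
apply: va => w; apply/negP => /existsP[e /andP[eS /joins_v_star]].
by rewrite !inE -orbA => /or3P[] /eqP ev; move: noStar; rewrite -ev eS ?orbT.
Qed.

End Reduction.

Theorem mainTheorem13 (V E : finType) (src dst : E -> V)
    (v x y z : V) (ex ey ez : E)
    (no_loops : forall e : E, src e != dst e)
    (G_bisp : bispanning src dst [set: V] [set: E])
    (G_atomic : atomic src dst [set: V] [set: E])
    (xy : x != y) (xz : x != z) (yz : y != z)
    (exy : ex != ey) (exz : ex != ez) (eyz : ey != ez)
    (deg3 : forall e : E, ((src e == v) || (dst e == v)) = (e \in [set ex; ey; ez]))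
    (Hex : joins src dst ex v x) (Hey : joins src dst ey v y)
    (Hez : joins src dst ez v z) :
  let A := rho_image src dst v x y ex ey ez ex ey ez in
  let B := rho_image src dst v x z ex ey ez ex ez ey in
  let C := rho_image src dst v y z ex ey ez ey ez ex in
  Vtau src dst [set: V] [set: E] = A :|: B :|: C /\
  [/\ [disjoint A & B], [disjoint A & C] & [disjoint B & C]].
Proof.
move=> A B C.
have permB e : (e \in [set ex; ey; ez]) = (e \in [set ex; ez; ey]).
  by rewrite !inE orbAC.
have permC e : (e \in [set ex; ey; ez]) = (e \in [set ey; ez; ex]).
  by rewrite !inE -orbA orbC.
have [eyx ezx ezy] : [/\ ey != ex, ez != ex & ez != ey] by split; rewrite eq_sym.
have memA := mem_rho_image no_loops Hex Hey Hez exy exz eyz deg3.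
have memB := mem_rho_image no_loops Hex Hez Hey exz exy ezy
  (fun e => etrans (deg3 e) (permB e)).
have memC := mem_rho_image no_loops Hey Hez Hex eyz eyx ezx
  (fun e => etrans (deg3 e) (permC e)).
rewrite -(rho_image_perm _ _ _ _ _ _ _ _ permB) in memB.
rewrite -(rho_image_perm _ _ _ _ _ _ _ _ permC) in memC.
split.
  apply/setP => -[S T]; rewrite !in_setU memA memB memC.
  case: (boolP (_ \in Vtau _ _ _ _)) => //= m.
  move: (m); rewrite mem_Vtau => /and4P[stS stT _ _].
  have := spanning_tree_meets_star no_loops Hex deg3 stT.
  have := spanning_tree_meets_star no_loops Hex deg3 stS.
  rewrite !(Vtau_compl m) ?in_setT // /separates_ec /=.
  by case: (ex \in S); case: (ey \in S); case: (ez \in S).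
split; apply/disjointP => -[S T]; rewrite ?memA ?memB ?memC => /andP[_ +] /andP[_];
  by rewrite /separates_ec /=; case: (ex \in S); case: (ey \in S); case: (ez \in S).
Qed.
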